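(* In the two-type population dependent branching process with parameters $p\in(0,1]$, $q\in[0,1]$, let $n(t)=n_A(t)+n_B(t)$ and let $W$ be the almost sure limit of $e^{-t}n_A(t)$ (a strictly positive finite random variable). Then $e^{-t}n(t)\to W+(1-p)W/p=:W_\infty$ almost surely as $t\to\infty$. In particular, the stopping times $T_n=\inf\{t\ge0: n(t)=n\}$ satisfy $T_n-\log n\to-\log W_\infty$ almost surely as $n\to\infty$, where $W_\infty$ is a strictly positive finite random variable.
   Context: Population dependent branching process: a continuous-time Markov process started at time $0$ with two individuals, one of type $A$ and one of type $B$; individuals live forever. Let $n_A(t), n_B(t)$ be the numbers of type $A$, $B$ individuals at time $t$ ($n_A(0)=n_B(0)=1$). At time $t$, each type $A$ individual gives birth to type $A$ individuals at rate $q$ and to type $B$ individuals at rate $(1-p)(1-q)/p$; each type $B$ individual gives birth to type $A$ individuals at rate $\frac{n_A(t)}{n_B(t)}(1-q)$ and to type $B$ individuals at rate $\frac{n_A(t)}{n_B(t)}\cdot\frac{q(1-p)}{p}$. *)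

From HB Require Import structures.
From mathcomp Require Import all_boot all_order all_algebra.
From mathcomp Require Import all_classical all_reals all_analysis.
Set Implicit Arguments. Unset Strict Implicit. Unset Printing Implicit Defensive.
Import Order.TTheory GRing.Theory Num.Theory.
Import numFieldNormedType.Exports.
Local Open Scope classical_set_scope.
Local Open Scope ring_scope.

Section PDBP.
Variable R : realType.

Definition rate_AA (p q : R) (s : nat * nat) : R := s.1%:R * q.
Definition rate_AB (p q : R) (s : nat * nat) : R :=
  s.1%:R * ((1 - p) * (1 - q) / p).
Definition rate_BA (p q : R) (s : nat * nat) : R :=
  s.2%:R * ((s.1%:R / s.2%:R) * (1 - q)).
Definition rate_BB (p q : R) (s : nat * nat) : R :=
  s.2%:R * ((s.1%:R / s.2%:R) * (q * (1 - p) / p)).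
Definition rateA (p q : R) s := rate_AA p q s + rate_BA p q s.
Definition rate_tot (p q : R) s :=
  rate_AA p q s + rate_AB p q s + rate_BA p q s + rate_BB p q s.

Definition jump_step (p q : R) (s : nat * nat) (u : R) : nat * nat :=
  if u * rate_tot p q s < rateA p q s then (s.1.+1, s.2) else (s.1, s.2.+1).

Variables (d : measure_display) (T : measurableType d).

Fixpoint jchain (p q : R) (U : nat -> T -> R) (w : T) (k : nat) : nat * nat :=
  if k is k'.+1 then jump_step p q (jchain p q U w k') (U k' w) else (1%N, 1%N).

(** jump times: holding time in state S_k is E_k / (total rate in S_k),
    with E_k standard exponential *)
Fixpoint jtime (p q : R) (E U : nat -> T -> R) (w : T) (k : nat) : R :=
  if k is k'.+1 then
    jtime p q E U w k' + E k' w / rate_tot p q (jchain p q U w k')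
  else 0.

(** index of the current state at time t (0 if no such index, which only
    happens for t < 0 or on the null explosion event) *)
Definition jindex (p q : R) (E U : nat -> T -> R) (w : T) (t : R) : nat :=
  xget 0%N [set k | jtime p q E U w k <= t < jtime p q E U w k.+1].

Definition nA (p q : R) (E U : nat -> T -> R) (w : T) (t : R) : nat :=
  (jchain p q U w (jindex p q E U w t)).1.
Definition nB (p q : R) (E U : nat -> T -> R) (w : T) (t : R) : nat :=
  (jchain p q U w (jindex p q E U w t)).2.
Definition ntot (p q : R) (E U : nat -> T -> R) (w : T) (t : R) : nat :=
  (nA p q E U w t + nB p q E U w t)%N.

Definition Tn (p q : R) (E U : nat -> T -> R) (n : nat) (w : T) : R :=
  inf [set t : R | 0 <= t /\ ntot p q E U w t = n].

Variable P : probability T R.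

Definition mutually_independent (I : eqType) (X : I -> T -> R) : Prop :=
  (forall i, measurable_fun setT (X i)) /\
  forall (J : seq I) (B : I -> set R), uniq J -> (forall i, measurable (B i)) ->
    P (\bigcap_(i in [set` J]) (X i @^-1` B i)) =
    \big[*%E/1%E]_(i <- J) P (X i @^-1` B i).

Definition is_std_exponential (X : T -> R) : Prop :=
  forall x : R, P [set w | X w <= x] = (if 0 <= x then 1 - expR (- x) else 0)%:E.

Definition is_uniform01 (X : T -> R) : Prop :=
  forall x : R, P [set w | X w <= x] =
    (if x < 0 then 0 else if x <= 1 then x else 1)%:E.

Definition driving_noise (E U : nat -> T -> R) : Prop :=
  mutually_independent (fun i : bool * nat => if i.1 then U i.2 else E i.2) /\
  (forall k, is_std_exponential (E k)) /\ (forall k, is_uniform01 (U k)).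

End PDBP.

From HB Require Import structures.
From mathcomp Require Import all_boot all_order all_algebra.
From mathcomp Require Import all_classical all_reals all_analysis.
From mathcomp Require Import ring lra.
Import Order.TTheory GRing.Theory Num.Theory.
Import numFieldNormedType.Exports.
Local Open Scope classical_set_scope.
Local Open Scope ring_scope.
Set Implicit Arguments. Unset Strict Implicit. Unset Printing Implicit Defensive.

(* While n_B >= 1, the total birth rate is n_A / p and a birth is of type A
   with probability p whatever the state, so after k births n_A = S_k + 1 and
   n = k + 2, where S_k counts the indices j < k with U_j < p.  The strong law
   of large numbers for these Bernoulli(p) trials (fourth central moment at
   most 4 k^2, then Borel-Cantelli) gives n(t) / n_A(t) -> 1 / p, hence
   e^-t n(t) -> W / p = W_oo.  As n = k + 2 exactly on [tau_k, tau_(k+1)),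
   T_(k+2) = tau_k and log (k + 2) - tau_k = log (e^-tau_k n(tau_k)) -> log W_oo. *)

Lemma cvg_shifted_ratio (R : realType) (u : R ^nat) (l a b : R) :
  (fun k => u k / k%:R) @ \oo --> l ->
  (fun k => (u k + a) / (k%:R + b)) @ \oo --> l.
Proof.
move=> ul; have inv0 : (fun k : nat => k%:R^-1) @ \oo --> (0 : R).
  by apply/gtr0_cvgV0; [near=> k; rewrite ltr0n; near: k; exists 1%N | exact: cvgr_idn].
have : (fun k => (u k / k%:R + a * k%:R^-1) / (1 + b * k%:R^-1)) @ \oo
    --> (l + a * 0) / (1 + b * 0).
  apply: cvgM; first exact: cvgD ul (cvgM (cvg_cst a) inv0).
  by apply: cvgV; [rewrite mulr0 addr0 oner_neq0 | exact: cvgD (cvg_cst _) (cvgM (cvg_cst b) inv0)].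
rewrite !mulr0 !addr0 divr1; apply: cvg_trans; apply: near_eq_cvg; near=> k.
have k0 : (k%:R : R) != 0 by rewrite pnatr_eq0 -lt0n; near: k; exists 1%N.
have kb : k%:R + b != 0.
  by rewrite gt_eqF // -ltrBlDr sub0r; near: k; exact: (cvgryPgt _).1 (@cvgr_idn R) _.
rewrite /=; field; rewrite k0 kb.
Unshelve. all: by end_near.
Qed.

Fixpoint bitseqs (n : nat) : seq (seq bool) :=
  if n is n'.+1 then [seq rcons s b | s <- bitseqs n', b <- [:: true; false]]
  else [:: [::]].

Lemma mem_bitseqs n s : (s \in bitseqs n) = (size s == n).
Proof.
elim: n s => [|n IH] s; first by rewrite /= inE size_eq0.
case/lastP: s => [|s b].
  apply/negbTE/allpairsP => -[[s' b'] [_ _ /= /(congr1 size)]].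
  by rewrite size_rcons.
rewrite size_rcons eqSS -IH.
apply/allpairsP/idP => [[[s' b'] [/= s'n _ /rcons_inj [-> _]]] //|sn].
by exists (s, b); split => //; case: b.
Qed.

Lemma uniq_bitseqs n : uniq (bitseqs n).
Proof.
elim: n => // n IH; apply: allpairs_uniq => // -[s b] [s' b'] _ _.
by move=> /rcons_inj [-> ->].
Qed.

Section FourthMoment.
Variable R : comNzRingType.

Definition bweight (p : R) (s : seq bool) : R :=
  \prod_(b <- s) (if b then p else 1 - p).

(* E[(S_n - c)^4] for S_n ~ Binomial(n, p), as a sum over the outcome strings s
   of the n trials, s having probability bweight p s. *)
Definition moment4 (p c : R) (n : nat) : R :=
  \sum_(s <- bitseqs n) bweight p s * ((count id s)%:R - c) ^+ 4.

Lemma moment4S p c n :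
  moment4 p c n.+1 = p * moment4 p (c - 1) n + (1 - p) * moment4 p c n.
Proof.
rewrite /moment4 (_ : bitseqs n.+1 = [seq rcons s b | s <- bitseqs n, b <- [:: true; false]]) //.
rewrite big_allpairs_dep !mulr_sumr -big_split /=.
apply: eq_bigr => s _; rewrite !big_cons big_nil addr0 /bweight !big_rcons /=.
rewrite -!cats1 !count_cat /= !addn0 addn1 -natr1.
ring.
Qed.

Lemma moment4E p c n : moment4 p c n =
  let v := p * (1 - p) in let e := n%:R * p - c in
  n%:R * v * (1 - 3 * v) + 3 * n%:R * (n%:R - 1) * v ^+ 2
  + 4 * e * n%:R * v * (1 - 2 * p) + 6 * e ^+ 2 * n%:R * v + e ^+ 4.
Proof.
elim: n c => [|n IH] c /=.
  rewrite /moment4 big_seq1 /bweight big_nil /=; ring.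
by rewrite moment4S !IH /= -natr1; ring.
Qed.

End FourthMoment.

Lemma bweight_ge0 (R : numDomainType) (p : R) s : 0 <= p <= 1 -> 0 <= bweight p s.
Proof. by case/andP => p0 p1; apply: prodr_ge0 => -[] _; rewrite ?subr_ge0. Qed.

Lemma moment4_mean_le (R : realFieldType) (p : R) n : 0 <= p <= 1 ->
  moment4 p (n%:R * p) n <= 4 * n%:R ^+ 2.
Proof.
move=> /andP[p0 p1]; rewrite moment4E /= subrr.
have n0 : n = 0%N \/ 1 <= (n%:R : R) by case: n => [|n]; [left | right; rewrite ler1n].
have v0 : 0 <= p * (1 - p) by rewrite mulr_ge0 // subr_ge0.
have v1 : p * (1 - p) <= 1 by nra.
case: n0 => [-> | n1]; first by rewrite !(mul0r, mulr0, addr0, expr0n, subr0).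
set v := p * (1 - p) in v0 v1 *; set x := (n%:R : R) in n1 *.
rewrite !(mulr0, mul0r, addr0, expr0n) /=.
have h1 : x * v * (1 - 3 * v) <= x ^+ 2.
  by rewrite -mulrA expr2 ler_wpM2l ?(le_trans ler01 n1) //; have := mulr_ge0 v0 v0; lra.
have h2 : x * (x - 1) * v ^+ 2 <= x * (x - 1).
  by rewrite ler_piMr ?mulr_ge0 ?subr_ge0 ?(le_trans ler01 n1) // expr2; nra.
lra.
Qed.

Lemma sum_inv_sqr_le (R : realFieldType) N :
  \sum_(k < N) (k.+1%:R ^+ 2)^-1 <= 2 - 2 / N.+1%:R :> R.
Proof.
elim: N => [|N IH]; first by rewrite big_ord0 divr1 subrr.
rewrite big_ord_recr /=; apply: le_trans (lerD IH (lexx _)) _.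
rewrite -[N.+2]addn1 natrD; have : 1 <= (N.+1%:R : R) by rewrite ler1n.
move: (N.+1%:R : R) => x x1.
have x0 : x != 0 by rewrite gt_eqF // (lt_le_trans ltr01).
have x10 : x + 1 != 0 by rewrite gt_eqF // ltr_wpDl // (le_trans ler01).
rewrite -subr_ge0 (_ : _ - _ = (x - 1) / (x ^+ 2 * (x + 1))); last by field; rewrite x0 x10.
by rewrite divr_ge0 ?subr_ge0 // mulr_ge0 ?sqr_ge0 // addr_ge0 // (le_trans ler01).
Qed.

Section JumpChain.
Variables (R : realType) (d : measure_display) (T : measurableType d).
Variables (p q : R) (E U : nat -> T -> R).

Definition trials (w : T) (n : nat) : seq bool := mkseq (fun j => U j w < p) n.
Definition successes (w : T) (n : nat) : nat := count id (trials w n).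

Lemma successes_le w n : (successes w n <= n)%N.
Proof. by rewrite /successes (leq_trans (count_size _ _)) // size_mkseq. Qed.

Lemma successesS w n : successes w n.+1 = (successes w n + (U n w < p)%R)%N.
Proof. by rewrite /successes /trials mkseqS -cats1 count_cat /= addn0. Qed.

Hypothesis p_gt0 : 0 < p.

Lemma rate_totE (a b : nat) : (0 < b)%N -> rate_tot p q (a, b) = a%:R / p.
Proof.
move=> b_gt0; have b0 : (b%:R : R) != 0 by rewrite pnatr_eq0 -lt0n.
by rewrite /rate_tot /rate_AA /rate_AB /rate_BA /rate_BB /=; field; rewrite b0 gt_eqF.
Qed.

Lemma rateAE (a b : nat) : (0 < b)%N -> rateA p q (a, b) = a%:R.
Proof.
move=> b_gt0; have b0 : (b%:R : R) != 0 by rewrite pnatr_eq0 -lt0n.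
by rewrite /rateA /rate_AA /rate_BA /=; field.
Qed.

(* In every reachable state n_B >= 1, so a birth is of type A with probability
   rateA / rate_tot = p: the chain only records which of the U_k fall below p. *)
Lemma jchainE w k : jchain p q U w k = ((successes w k).+1, (k - successes w k).+1).
Proof.
elim: k => [|k IH] //=; rewrite IH /jump_step rate_totE // rateAE //=.
rewrite mulrA ltr_pdivrMr // mulrC ltr_pM2l ?ltr0n // successesS.
have := successes_le w k; case: (U k w < p) => /= sk.
  by rewrite addn1 subSS.
by rewrite addn0 subSn.
Qed.

Variable w : T.
Local Notation J := (jindex p q E U w).
Local Notation tau := (jtime p q E U w).

Lemma nAE t : nA p q E U w t = (successes w (J t)).+1.
Proof. by rewrite /nA jchainE. Qed.

Lemma ntotE t : ntot p q E U w t = (J t).+2.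
Proof. by rewrite /ntot /nA /nB jchainE /= addSn addnS subnKC // successes_le. Qed.

Section JumpTimes.
Hypothesis E_gt0 : forall j, 0 < E j w.

Lemma jtime_ltS k : tau k < tau k.+1.
Proof. by rewrite /= ltrDl divr_gt0 // jchainE rate_totE // divr_gt0 ?ltr0n. Qed.

Lemma jtime_le : {mono tau : i j / (i <= j)%N >-> i <= j}.
Proof. exact: le_mono (homo_ltn lt_trans jtime_ltS). Qed.

Lemma jtime_lt : {mono tau : i j / (i < j)%N >-> i < j}.
Proof. exact/leW_mono/jtime_le. Qed.

Lemma jindexP t : J t = 0%N \/ tau (J t) <= t < tau (J t).+1.
Proof.
have [ex|nex] := pselect (exists k, tau k <= t < tau k.+1).
  by right; exact: (xgetPex 0%N ex).
by left; apply: xgetPN => k Hk; apply: nex; exists k.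
Qed.

Lemma jindex_jtime k : J (tau k) = k.
Proof.
apply: xget_unique => [|j /andP[]]; first by rewrite /= lexx jtime_ltS.
by rewrite jtime_le jtime_lt ltnS => jk kj; apply/eqP; rewrite eqn_leq jk kj.
Qed.

Lemma jtime_jindex_le t : 0 <= t -> tau (J t) <= t.
Proof. by move=> t0; case: (jindexP t) => [->|/andP[]]. Qed.

Lemma Tn_jtime k : Tn p q E U k.+2 w = tau k.
Proof.
set S := [set t | 0 <= t /\ ntot p q E U w t = k.+2].
have Sk : S (tau k).
  by split; [rewrite -[0]/(tau 0) jtime_le | rewrite ntotE jindex_jtime].
have lbS : lbound S (tau k).
  by move=> t [t0]; rewrite ntotE => -[<-]; exact: jtime_jindex_le.
apply/le_anti/andP; split; first exact: ge_inf (ex_intro _ _ lbS) _ Sk.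
by apply: lb_le_inf => //; exists (tau k).
Qed.

Lemma jtime_cvgy : J t @[t --> +oo] --> \oo -> tau k @[k --> \oo] --> +oo.
Proof.
move=> J_cvg; apply/cvgryPge => A.
have [t [At Jt]] : exists t, A <= t /\ (0 < J t)%N.
  by apply: filter_ex (filterI (nbhs_pinfty_ge (num_real A)) ((cvgnyPgt _).1 J_cvg 0%N)).
exists (J t).+1 => // k /= Jk; rewrite (le_trans At) // ltW //.
case: (jindexP t) => [J0|/andP[_ tJ]]; first by rewrite J0 in Jt.
by rewrite (lt_le_trans tJ) // jtime_le.
Qed.

End JumpTimes.

Section Asymptotics.
Variable W : R.
Hypotheses (W_gt0 : 0 < W)
  (nA_cvg : (fun t : R => expR (- t) * (nA p q E U w t)%:R) @ +oo --> W).

Lemma jindex_cvgy : J t @[t --> +oo] --> \oo.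
Proof.
apply/cvgnyPgt => N; have W2 : 0 < W / 2 by rewrite divr_gt0.
have WN : 0 < W / 2 / N.+1%:R by rewrite divr_gt0.
near=> t.
have lbnA : W / 2 < expR (- t) * (nA p q E U w t)%:R.
  have : `|W - expR (- t) * (nA p q E U w t)%:R| < W / 2.
    by near: t; exact: (cvgrPdist_lt _ _).1 nA_cvg _ W2.
  by rewrite ltr_distlC => /andP[+ _]; rewrite (_ : W - W / 2 = W / 2) //; field.
have ubexp : expR (- t) * N.+1%:R < W / 2.
  rewrite -ltr_pdivlMr ?ltr0n //.
  have : `|0 - expR (- t)| < W / 2 / N.+1%:R.
    by near: t; exact: (cvgrPdist_lt _ _).1 (@cvgr_expR R) _ WN.
  by rewrite sub0r normrN gtr0_norm ?expR_gt0.
have := lt_trans ubexp lbnA; rewrite ltr_pM2l ?expR_gt0 // ltr_nat nAE ltnS.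
by move/leq_trans; apply; exact: successes_le.
Unshelve. all: by end_near.
Qed.

Lemma ntot_cvg : (fun k => (successes w k)%:R / k%:R) @ \oo --> p ->
  (fun t : R => expR (- t) * (ntot p q E U w t)%:R) @ +oo --> W / p.
Proof.
move=> slln.
have ratio : (fun k => k.+2%:R / (successes w k).+1%:R) @ \oo --> p^-1.
  rewrite (_ : (fun k => _) = fun k => (((successes w k)%:R + 1) / (k%:R + 2))^-1).
    exact: cvgV (lt0r_neq0 p_gt0) (cvg_shifted_ratio _ _ slln).
  by apply/funext => k; rewrite /= invf_div -[k.+2]addn2 -[(successes w k).+1]addn1 !natrD.
suff -> : (fun t => expR (- t) * (ntot p q E U w t)%:R) = fun t =>
    expR (- t) * (nA p q E U w t)%:R * ((J t).+2%:R / (successes w (J t)).+1%:R).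
  exact: cvgM nA_cvg (cvg_comp _ _ jindex_cvgy ratio).
by apply/funext => t; rewrite ntotE nAE -mulrA [_ * (_ / _)]mulrC divfK ?pnatr_eq0.
Qed.

Lemma Tn_log_cvg : (forall j, 0 < E j w) ->
  (fun k => (successes w k)%:R / k%:R) @ \oo --> p ->
  (fun n : nat => Tn p q E U n w - ln n%:R) @ \oo --> - ln (W / p).
Proof.
move=> E_gt0 slln; have Wp : 0 < W / p by rewrite divr_gt0.
have ntot_jtime := cvg_comp _ _ (jtime_cvgy E_gt0 jindex_cvgy) (ntot_cvg slln).
have lim : (fun k => - ln (expR (- tau k) * (ntot p q E U w (tau k))%:R)) @ \oo
    --> - ln (W / p) by exact: cvgN (cvg_comp _ _ ntot_jtime (continuous_ln Wp)).
rewrite -(cvg_shiftn 2); apply: cvg_trans lim; apply: near_eq_cvg; apply: nearW => k /=.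
rewrite addn2 Tn_jtime // ntotE jindex_jtime // lnM ?posrE ?expR_gt0 ?ltr0n //.
by rewrite expRK opprD opprK.
Qed.

End Asymptotics.
End JumpChain.

Section DrivingNoise.
Variables (R : realType) (d : measure_display) (T : measurableType d).
Variables (P : probability T R) (p : R) (E U : nat -> T -> R).
Hypotheses (p_gt0 : 0 < p) (p_le1 : p <= 1) (noise : driving_noise P E U).

Local Notation noise_family := (fun i : bool * nat => if i.1 then U i.2 else E i.2).

Lemma measurable_noise i (B : set R) : measurable B -> measurable (noise_family i @^-1` B).
Proof. by case: noise => [[mF _] _] mB; rewrite -[_ @^-1` B]setTI; exact: mF. Qed.

Lemma P_U_le j x : 0 <= x <= 1 -> P (U j @^-1` `]-oo, x]%classic) = x%:E.
Proof.
case/andP => x0 x1; case: noise => _ [_ U_unif].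
rewrite (_ : _ @^-1` _ = [set w | U j w <= x]) ?U_unif ?ltNge ?x0 ?x1 //.
Qed.

Lemma P_U_lt j : P (U j @^-1` `]-oo, p[%classic) = p%:E.
Proof.
have mU (i : interval R) : measurable (U j @^-1` [set` i]).
  exact: (measurable_noise (true, j)) (measurable_itv i).
apply/le_anti/andP; split.
  rewrite -(P_U_le j (x := p)) ?(ltW p_gt0) ?p_le1 //.
  by apply: le_measure; rewrite ?inE // => w /=; rewrite !in_itv /=; exact: ltW.
apply/lee_subgt0Pr => e e0; rewrite -EFinB; have [ep|pe] := lerP e p.
  rewrite -(P_U_le j (x := p - e)); last by rewrite subr_ge0 ep lerBlDr (le_trans p_le1) // lerDl ltW.
  apply: le_measure; rewrite ?inE // => w /=; rewrite !in_itv /= => /le_lt_trans; apply.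
  by rewrite ltrBlDr ltrDl.
by rewrite (le_trans _ (measure_ge0 _ _)) // lee_fin subr_le0 ltW.
Qed.

Lemma P_U_ge j : P (U j @^-1` `[p, +oo[%classic) = (1 - p)%:E.
Proof.
have -> : U j @^-1` `[p, +oo[%classic = ~` (U j @^-1` `]-oo, p[%classic).
  by apply/seteqP; split => w /=; rewrite !in_itv /= andbT leNgt => /negP.
rewrite probability_setC ?P_U_lt //.
exact: (measurable_noise (true, j)) (measurable_itv _).
Qed.

Definition cylinder (s : seq bool) : set T := [set w | trials p U w (size s) = s].

Let trial_set (b : bool) : set R := if b then `]-oo, p[%classic else `[p, +oo[%classic.

Let cylinder_index (s : seq bool) : seq (bool * nat) := [seq (true, j) | j <- iota 0 (size s)].

Lemma cylinderE s : cylinder s =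
  \bigcap_(i in [set` cylinder_index s]) (noise_family i @^-1` trial_set (nth false s i.2)).
Proof.
apply/seteqP; split => w.
  move=> ws [b j] /mapP[j']; rewrite mem_iota add0n => /andP[_ js] [-> ->] /=.
  rewrite /trial_set -ws /trials nth_mkseq //.
  by case: ifP => h; rewrite /= in_itv /= ?andbT // leNgt h.
move=> ws; apply: (@eq_from_nth _ false); first by rewrite size_mkseq.
move=> j; rewrite size_mkseq => js; rewrite nth_mkseq //.
have /= := ws (true, j) (map_f _ _); rewrite mem_iota add0n js => /(_ erefl).
rewrite /trial_set; case: (nth false s j); rewrite /= in_itv /= ?andbT => // h.
by apply/negbTE; rewrite -leNgt.
Qed.

Lemma measurable_cylinder s : measurable (cylinder s).
Proof.
rewrite cylinderE; apply: fin_bigcap_measurable; first exact: finite_seq.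
by move=> i _; apply: measurable_noise; rewrite /trial_set; case: ifP.
Qed.

Lemma P_cylinder s : P (cylinder s) = (bweight p s)%:E.
Proof.
case: noise => [[_ indep] _]; rewrite cylinderE indep; last 2 first.
- by rewrite map_inj_uniq ?iota_uniq // => a b [].
- by move=> i; rewrite /trial_set; case: ifP.
rewrite big_map /trial_set; under eq_bigr => j _.
  by rewrite /= (fun_if (fun B => P (U j @^-1` B))) P_U_lt P_U_ge -(fun_if EFin) over.
by rewrite prodEFin /bweight (big_nth false) /index_iota subn0.
Qed.

Definition deviation (e : R) (n : nat) : set T :=
  [set w | n%:R * e < `|(successes p U w n)%:R - n%:R * p|].

Let deviating (e : R) (n : nat) : seq (seq bool) :=
  [seq s <- bitseqs n | n%:R * e < `|(count id s)%:R - n%:R * p|].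

Lemma deviationE e n : deviation e n = \bigcup_(s in [set` deviating e n]) cylinder s.
Proof.
apply/seteqP; split => w.
  move=> dev; exists (trials p U w n); last by rewrite /cylinder /= size_mkseq.
  by rewrite /= mem_filter mem_bitseqs size_mkseq eqxx andbT.
move=> [s]; rewrite /= mem_filter mem_bitseqs => /andP[dev /eqP sn].
by rewrite /cylinder /= sn => ws; rewrite /deviation /= /successes ws.
Qed.

Lemma measurable_deviation e n : measurable (deviation e n).
Proof.
rewrite deviationE; apply: fin_bigcup_measurable; first exact: finite_seq.
by move=> s _; exact: measurable_cylinder.
Qed.

Lemma P_deviation e n : P (deviation e n) = (\sum_(s <- deviating e n) bweight p s)%:E.
Proof.
rewrite deviationE measure_fin_bigcup //; last 3 first.
- exact: finite_seq.
- move=> s s'; rewrite /= !mem_filter !mem_bitseqs => /andP[_ /eqP sn] /andP[_ /eqP s'n].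
  by move=> [w [/= ws ws']]; rewrite -ws -ws' sn s'n.
- by move=> s _; exact: measurable_cylinder.
rewrite -fsbig_seq ?filter_uniq ?uniq_bitseqs //.
by rewrite (eq_bigr _ (fun s _ => P_cylinder s)) sumEFin.
Qed.

(* Markov's inequality for the fourth central moment; for n = 0 the bound is
   0 by the convention 0^-1 = 0, and indeed deviation e 0 is empty. *)
Lemma P_deviation_le e n : 0 < e -> (P (deviation e n) <= (4 / e ^+ 4 / n%:R ^+ 2)%:E)%E.
Proof.
move=> e_gt0; have p01 : 0 <= p <= 1 by rewrite (ltW p_gt0).
case: n => [|n].
  rewrite (_ : deviation e 0 = set0) ?measure0 ?lee_fin ?expr0n ?invr0 ?mulr0 //.
  by apply/seteqP; split => w //=; rewrite /deviation /= !mul0r subr0 normr0 ltxx.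
have ne_gt0 : 0 < (n.+1%:R * e) ^+ 4 by rewrite exprn_gt0 // mulr_gt0.
rewrite P_deviation lee_fin.
apply: (@le_trans _ _ (moment4 p (n.+1%:R * p) n.+1 / (n.+1%:R * e) ^+ 4)).
  rewrite big_filter /moment4 mulr_suml [leRHS](bigID [pred s | n.+1%:R * e <
    `|(count id s)%:R - n.+1%:R * p|]) /= ler_wpDr //.
    apply: sumr_ge0 => s _.
    by rewrite divr_ge0 ?(ltW ne_gt0) // mulr_ge0 ?exprn_even_ge0 ?bweight_ge0 ?p01.
  apply: ler_sum => s dev; rewrite -mulrA ler_peMr ?bweight_ge0 ?p01 //.
  have pow4 (x : R) : x ^+ 4 = `|x| ^+ 4 by rewrite -normrX ger0_norm ?exprn_even_ge0.
  rewrite ler_pdivlMr // mul1r [leRHS]pow4 ltW // ltrXn2r // ?nnegrE //.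
  by rewrite mulr_ge0 ?ltW.
apply: le_trans (ler_wpM2r (ltW _) (moment4_mean_le n.+1 p01)) _; first by rewrite invr_gt0.
rewrite [leLHS](_ : _ = 4 / e ^+ 4 / n.+1%:R ^+ 2) ?lexx //.
by field; rewrite nat1r pnatr_eq0 /= gt_eqF.
Qed.

Lemma deviation_summable e : 0 < e -> (\sum_(k <oo) P (deviation e k) < +oo)%E.
Proof.
move=> e_gt0; set c := 4 / e ^+ 4; have c_ge0 : 0 <= c by rewrite divr_ge0 ?exprn_ge0 ?ltW.
apply: (@le_lt_trans _ _ (2 * c)%:E); last exact: ltry.
apply: lime_le; first exact: is_cvg_nneseries.
apply: nearW => -[|N]; first by rewrite big_geq // lee_fin mulr_ge0.
rewrite big_mkord; apply: le_trans.
  by apply: lee_sum => k _; exact: P_deviation_le.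
rewrite sumEFin lee_fin big_ord_recl /= expr0n invr0 mulr0 add0r -mulr_sumr mulrC.
apply: le_trans (ler_wpM2r c_ge0 (sum_inv_sqr_le _ N)) _.
by rewrite ler_wpM2r // lerBlDr lerDl.
Qed.

Lemma ae_eventually_small_deviation e : 0 < e ->
  {ae P, forall w, \forall k \near \oo, ~ deviation e k w}.
Proof.
move=> e_gt0; exists (lim_sup_set (deviation e)); split.
- apply: bigcapT_measurable => n; apply: bigcup_measurable => k _.
  exact: measurable_deviation.
- exact: lim_sup_set_cvg0 (measurable_deviation e) (deviation_summable e_gt0).
- move=> w /= not_ev n _; apply: contrapT => no_dev; apply: not_ev.
  by exists n => // k /= nk dev; apply: no_dev; exists k.
Qed.

Lemma successes_cvg_ae :
  {ae P, forall w, (fun k => (successes p U w k)%:R / k%:R) @ \oo --> p}.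
Proof.
have : {ae P, forall w m, \forall k \near \oo, ~ deviation m.+1%:R^-1 k w}.
  by apply: ae_foralln => m; apply: ae_eventually_small_deviation; rewrite invr_gt0.
apply: filterS => w small; apply/cvgrPdist_le => eps eps_gt0.
have [m _ /(_ m (leqnn m)) m_eps] := near_infty_natSinv_lt (PosNum eps_gt0).
near=> k.
have k_gt0 : (0 < k)%N by near: k; exists 1%N.
have : ~ deviation m.+1%:R^-1 k w by near: k; exact: small m.
rewrite /deviation /= => /negP; rewrite -leNgt => dev.
have k0 : 0 < (k%:R : R) by rewrite ltr0n.
rewrite (_ : p - _ = (k%:R * p - (successes p U w k)%:R) / k%:R); last first.
  by field; rewrite lt0r_neq0.
rewrite normrM normfV (gtr0_norm k0) ler_pdivrMr // distrC (le_trans dev) //.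
by rewrite [leRHS]mulrC ler_wpM2l ?ltW.
Unshelve. all: by end_near.
Qed.

Lemma E_gt0_ae : {ae P, forall w j, 0 < E j w}.
Proof.
apply: ae_foralln => j; exists (E j @^-1` `]-oo, 0]%classic); split.
- exact: (measurable_noise (false, j)) (measurable_itv _).
- case: noise => _ [E_exp _]; rewrite -[LHS]/(P [set w | E j w <= 0]) E_exp.
  by rewrite lexx oppr0 expR0 subrr.
- by move=> w /= /negP; rewrite -leNgt in_itv.
Qed.

End DrivingNoise.

Theorem lemma5p3 (R : realType) (d : measure_display) (T : measurableType d)
  (P : probability T R) (p q : R) (E U : nat -> T -> R) (W : T -> R) :
  0 < p -> p <= 1 -> 0 <= q -> q <= 1 ->
  driving_noise P E U ->
  {ae P, forall w, (fun t : R => expR (- t) * (nA p q E U w t)%:R) @ +oo --> W w} ->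
  {ae P, forall w, 0 < W w} ->
  {ae P, forall w,
     (fun t : R => expR (- t) * (ntot p q E U w t)%:R) @ +oo
       --> W w + (1 - p) * W w / p} /\
  {ae P, forall w,
     (fun n : nat => Tn p q E U n w - ln n%:R) @ \oo
       --> - ln (W w + (1 - p) * W w / p)}.
Proof.
move=> p_gt0 p_le1 _ _ noise nA_cvg W_gt0.
have W_inf w : W w + (1 - p) * W w / p = W w / p by field; rewrite lt0r_neq0.
have slln := successes_cvg_ae p_gt0 p_le1 noise.
split.
  apply: filterS (filterI slln (filterI nA_cvg W_gt0)) => w [sllnw [nAw Ww]].
  by rewrite W_inf; exact: ntot_cvg.
apply: filterS (filterI (E_gt0_ae noise) (filterI slln (filterI nA_cvg W_gt0))).
by move=> w [Ew [sllnw [nAw Ww]]]; rewrite W_inf; exact: Tn_log_cvg.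
Qed.
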